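(* Let $\boldsymbol{\Psi}_{\mathrm{id}}=\mathrm{diag}(\psi_{\mathrm{id},1},\dots,\psi_{\mathrm{id},N})$ with all $\psi_{\mathrm{id},i}>0$, $\boldsymbol{\Psi}_{\mathrm{f}}=\mathrm{diag}(\psi_{\mathrm{f},1},\dots,\psi_{\mathrm{f},K})$ with all $\psi_{\mathrm{f},k}>0$, and $\mathbf{W}=[\mathbf{w}_1\ \cdots\ \mathbf{w}_K]\in\mathbb{R}^{N\times K}$ with linearly independent columns. For scalars $\alpha,\beta\in(0,1]$ let $\mathbf{G}=\left(\alpha\boldsymbol{\Psi}_{\mathrm{id}}+\beta\mathbf{W}\boldsymbol{\Psi}_{\mathrm{f}}\mathbf{W}^\top\right)^{-1}$ and, for $\mathbf{v}\in\mathbb{R}^N$, $\bar{\mathcal{C}}(\mathbf{v})=\tfrac12\mathbf{v}^\top\mathbf{G}\mathbf{v}$ (which depends on $\alpha,\beta$). Then: (i) $\displaystyle\lim_{\alpha\to1,\beta\to0}\bar{\mathcal{C}}(\mathbf{v})=\tfrac12\mathbf{v}^\top\boldsymbol{\Psi}_{\mathrm{id}}^{-1}\mathbf{v}=\tfrac12\sum_{i=1}^N\frac{v_i^2}{\psi_{\mathrm{id},i}}$; (ii) $\displaystyle\lim_{\alpha\to0,\beta\to1}\bar{\mathcal{C}}(\mathbf{v})=\infty$ if $\mathbf{v}\notin\mathrm{span}(\mathbf{w}_1,\dots,\mathbf{w}_K)$, and $\displaystyle\lim_{\alpha\to0,\beta\to1}\bar{\mathcal{C}}(\mathbf{v})=\tfrac12\mathbf{u}^\top\boldsymbol{\Psi}_{\mathrm{f}}^{-1}\mathbf{u}$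 if $\mathbf{v}=\mathbf{W}\mathbf{u}$ with $\mathbf{u}\in\mathbb{R}^K$.
   Context: $\bar{\mathcal{C}}(\mathbf{v})$ is the one-period expected implementation shortfall of executing $\mathbf{v}$ shares under linear price impact with coefficient matrix $\mathbf{G}$. *)

From HB Require Import structures.
From mathcomp Require Import all_boot all_order all_algebra.
From mathcomp Require Import all_classical all_reals all_analysis.
Set Implicit Arguments. Unset Strict Implicit. Unset Printing Implicit Defensive.
Import Order.TTheory GRing.Theory Num.Theory numFieldNormedType.Exports.
Local Open Scope ring_scope.

Definition impactG (R : realType) (N K : nat) (psi_id : 'rV[R]_N)
  (psi_f : 'rV[R]_K) (W : 'M[R]_(N, K)) (alpha beta : R) : 'M[R]_N :=
  invmx (alpha *: diag_mx psi_id + beta *: (W *m diag_mx psi_f *m W^T)).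

Definition Cbar (R : realType) (N K : nat) (psi_id : 'rV[R]_N)
  (psi_f : 'rV[R]_K) (W : 'M[R]_(N, K)) (alpha beta : R) (v : 'cV[R]_N) : R :=
  2^-1 * (v^T *m impactG psi_id psi_f W alpha beta *m v) 0 0.

Definition param_dom (R : realType) : set (R * R) :=
  fun p => (0 < p.1 <= 1) /\ (0 < p.2 <= 1).

From HB Require Import structures.
From mathcomp Require Import all_boot all_order all_algebra.
From mathcomp Require Import all_classical all_reals all_analysis.
From mathcomp Require Import ring lra.
Set Implicit Arguments.
Unset Strict Implicit.
Unset Printing Implicit Defensive.
Import Order.TTheory GRing.Theory Num.Theory numFieldNormedType.Exports.
Local Open Scope ring_scope.
Local Open Scope classical_set_scope.

(* For a symmetric positive definite M,
     v^T M^-1 v = max_x (2 x^T v - x^T M x),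
   attained at x = M^-1 v.  With M = alpha Psi_id + beta W Psi_f W^T, dropping
   either of the two nonnegative parts of x^T M x gives the upper bounds
   alpha^-1 v^T Psi_id^-1 v and, for v = W u, beta^-1 u^T Psi_f^-1 u; the test
   vectors x = Psi_id^-1 v, resp. any x with W^T x = Psi_f^-1 u, give lower
   bounds with the same limits.  If v is not in the span of W, a test vector
   c z with W^T z = 0 and z^T v <> 0 makes the right-hand side grow like
   alpha^-1. *)

Definition vdot (R : pzSemiRingType) n (x y : 'cV[R]_n) : R := (x^T *m y) 0 0.
Definition qform (R : pzSemiRingType) n (M : 'M[R]_n) (x : 'cV[R]_n) : R :=
  (x^T *m M *m x) 0 0.

Section QuadraticForm.
Variable R : realFieldType.

Lemma vdotC n (x y : 'cV[R]_n) : vdot x y = vdot y x.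
Proof.
have -> : vdot x y = (x^T *m y)^T 0 0 by rewrite mxE.
by rewrite trmx_mul trmxK.
Qed.

Lemma vdot_mulmxr m n (A : 'M[R]_(m, n)) (x : 'cV[R]_m) (y : 'cV[R]_n) :
  vdot x (A *m y) = vdot (A^T *m x) y.
Proof. by rewrite /vdot trmx_mul trmxK mulmxA. Qed.

Lemma vdotZl n a (x y : 'cV[R]_n) : vdot (a *: x) y = a * vdot x y.
Proof. by rewrite /vdot linearZ /= -scalemxAl mxE. Qed.

Lemma qformZ n (M : 'M[R]_n) a (x : 'cV[R]_n) :
  qform M (a *: x) = a ^+ 2 * qform M x.
Proof.
by rewrite /qform -scalemxAr linearZ /= -!scalemxAl scalerA mxE expr2.
Qed.

Lemma qformDl n (M1 M2 : 'M[R]_n) (x : 'cV[R]_n) :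
  qform (M1 + M2) x = qform M1 x + qform M2 x.
Proof. by rewrite /qform mulmxDr mulmxDl mxE. Qed.

Lemma qformZl n a (M : 'M[R]_n) (x : 'cV[R]_n) :
  qform (a *: M) x = a * qform M x.
Proof. by rewrite /qform -scalemxAr -scalemxAl mxE. Qed.

Lemma qform_mulmx_tr m n (A : 'M[R]_(m, n)) (M : 'M[R]_n) (x : 'cV[R]_m) :
  qform (A *m M *m A^T) x = qform M (A^T *m x).
Proof. by rewrite /qform trmx_mul trmxK !mulmxA. Qed.

Lemma vdot_invmx n (M : 'M[R]_n) (v : 'cV[R]_n) :
  vdot (invmx M *m v) v = qform (invmx M) v.
Proof. by rewrite vdotC /vdot mulmxA. Qed.

Lemma qform_invmx_mul n (M : 'M[R]_n) (v : 'cV[R]_n) :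
  M \in unitmx -> qform M (invmx M *m v) = qform (invmx M) v.
Proof.
by move=> uM; rewrite /qform -mulmxA mulKVmx //; exact: vdot_invmx.
Qed.

Lemma qform_sub_invmx n (M : 'M[R]_n) (x v : 'cV[R]_n) :
  M^T = M -> M \in unitmx ->
  qform M (x - invmx M *m v) = qform M x - 2 * vdot x v + qform (invmx M) v.
Proof.
move=> sM uM; set x0 := invmx M *m v.
have Mx0 : M *m x0 = v by rewrite mulKVmx.
have x0M : x0^T *m M = v^T by rewrite -sM -trmx_mul Mx0.
rewrite /qform; have -> : (x - x0)^T = x^T - x0^T by exact: linearB.
rewrite !mulmxBl x0M !mulmxBr -[x^T *m M *m x0]mulmxA Mx0.
have entryB (A B : 'M[R]_1) : (A - B) 0 0 = A 0 0 - B 0 0 by rewrite !mxE.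
rewrite !entryB -/(vdot x v) -/(vdot v x) -/(vdot v x0) -/(qform (invmx M) v).
by rewrite [vdot v x]vdotC [vdot v x0]vdotC vdot_invmx; lra.
Qed.

Lemma qform_invmx_ge n (M : 'M[R]_n) (x v : 'cV[R]_n) a :
  M^T = M -> M \in unitmx -> (forall z, 0 <= qform M z) -> 0 < a ->
  2 * vdot x v - a * qform M x <= a^-1 * qform (invmx M) v.
Proof.
move=> sM uM psdM a_gt0; rewrite ler_pdivlMl //.
have := psdM (a *: x - invmx M *m v).
by rewrite qform_sub_invmx // qformZ vdotZl; nra.
Qed.

Lemma qform_invmx_le n (M : 'M[R]_n) (v : 'cV[R]_n) c : M \in unitmx ->
  (forall x, 2 * vdot x v - qform M x <= c) -> qform (invmx M) v <= c.
Proof.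
by move=> uM /(_ (invmx M *m v)); rewrite qform_invmx_mul // vdot_invmx; lra.
Qed.

Lemma qform_eq0_unitmx n (M : 'M[R]_n) :
  (forall x, qform M x = 0 -> x = 0) -> M \in unitmx.
Proof.
move=> qM; rewrite -row_free_unit; apply: inj_row_free => z zM.
have /qM/(congr1 trmx) : qform M z^T = 0 by rewrite /qform trmxK zM mul0mx mxE.
by rewrite trmxK trmx0.
Qed.

Lemma qform_diag n (d : 'rV[R]_n) (x : 'cV[R]_n) :
  qform (diag_mx d) x = \sum_i d 0 i * x i 0 ^+ 2.
Proof.
rewrite /qform mul_mx_diag mxE; apply: eq_bigr => i _.
by rewrite !mxE mulrAC mulrC expr2.
Qed.

End QuadraticForm.

Section DiagonalForm.
Variables (R : realFieldType) (n : nat) (d : 'rV[R]_n).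
Hypothesis d_gt0 : forall i, 0 < d 0 i.

Lemma qform_diag_ge0 x : 0 <= qform (diag_mx d) x.
Proof.
by rewrite qform_diag sumr_ge0 // => i _; rewrite mulr_ge0 ?sqr_ge0 ?ltW.
Qed.

Lemma qform_diag_eq0 x : (qform (diag_mx d) x == 0) = (x == 0).
Proof.
apply/eqP/eqP => [|->]; last by rewrite /qform mulmx0 mxE.
rewrite qform_diag => /eqP; rewrite psumr_eq0 => [/allP x0|i _]; last first.
  by rewrite mulr_ge0 ?sqr_ge0 ?ltW.
apply/matrixP => i j; rewrite (ord1 j) mxE.
move: (x0 i (mem_index_enum i)); rewrite mulf_eq0 sqrf_eq0 gt_eqF //=.
by move/eqP.
Qed.

Lemma diag_mx_unit : diag_mx d \in unitmx.
Proof.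
by apply: qform_eq0_unitmx => x /eqP; rewrite qform_diag_eq0 => /eqP.
Qed.

Lemma invmx_diag : invmx (diag_mx d) = diag_mx (\row_i (d 0 i)^-1).
Proof.
have dV : diag_mx d *m diag_mx (\row_i (d 0 i)^-1) = 1%:M.
  rewrite mulmx_diag -diag_const_mx; congr diag_mx; apply/matrixP => i j.
  by rewrite !mxE divff // gt_eqF.
by rewrite -[invmx _]mulmx1 -dV mulKmx // diag_mx_unit.
Qed.

Lemma qform_invmx_diag v :
  qform (invmx (diag_mx d)) v = \sum_i v i 0 ^+ 2 / d 0 i.
Proof.
by rewrite invmx_diag qform_diag; apply: eq_bigr => i _; rewrite mxE mulrC.
Qed.

End DiagonalForm.

Lemma notin_colspan_witness (R : fieldType) m n (A : 'M[R]_(m, n))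
    (v : 'cV[R]_m) :
  ~ (exists u, v = A *m u) ->
  exists2 z : 'cV[R]_m, A^T *m z = 0 & vdot v z != 0.
Proof.
move=> vA; set C := cokermx A^T.
have /matrix0Pn[i [j vCij]] : v^T *m C != 0.
  apply: contra_notN vA; rewrite -submxE => /submxP[D vD].
  by exists D^T; rewrite -[v]trmxK vD trmx_mul trmxK.
exists (col j C); first by rewrite colE mulmxA mulmx_coker mul0mx.
by rewrite /vdot colE mulmxA -colE mxE -(ord1 i).
Qed.

Section ImpactMatrix.
Variables (R : realFieldType) (N K : nat).
Variables (psi_id : 'rV[R]_N) (psi_f : 'rV[R]_K) (W : 'M[R]_(N, K)).
Hypothesis psi_id_gt0 : forall i, 0 < psi_id 0 i.
Hypothesis psi_f_gt0 : forall k, 0 < psi_f 0 k.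

Definition impact_mx a b : 'M[R]_N :=
  a *: diag_mx psi_id + b *: (W *m diag_mx psi_f *m W^T).

Lemma qform_impact a b x : qform (impact_mx a b) x =
  a * qform (diag_mx psi_id) x + b * qform (diag_mx psi_f) (W^T *m x).
Proof. by rewrite qformDl !qformZl qform_mulmx_tr. Qed.

Lemma impact_mx_sym a b : (impact_mx a b)^T = impact_mx a b.
Proof.
by rewrite /impact_mx linearD !linearZ /= !trmx_mul trmxK !tr_diag_mx mulmxA.
Qed.

Lemma qform_impact_ge0 a b x :
  0 <= a -> 0 <= b -> 0 <= qform (impact_mx a b) x.
Proof.
by move=> a_ge0 b_ge0; rewrite qform_impact addr_ge0 ?mulr_ge0 ?qform_diag_ge0.
Qed.

Lemma impact_mx_unit a b : 0 < a -> 0 <= b -> impact_mx a b \in unitmx.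
Proof.
move=> a_gt0 b_ge0; apply: qform_eq0_unitmx => x /eqP.
rewrite qform_impact paddr_eq0 ?mulr_ge0 ?qform_diag_ge0 ?(ltW a_gt0) //.
by rewrite mulf_eq0 gt_eqF //= qform_diag_eq0 // => /andP[/eqP].
Qed.

Lemma qform_invmx_impact_ge a b x v : 0 < a -> 0 <= b ->
  2 * vdot x v - a * qform (diag_mx psi_id) x
    - b * qform (diag_mx psi_f) (W^T *m x)
    <= qform (invmx (impact_mx a b)) v.
Proof.
move=> a_gt0 b_ge0.
have := qform_invmx_ge x v (impact_mx_sym a b) (impact_mx_unit a_gt0 b_ge0)
  (fun z => qform_impact_ge0 z (ltW a_gt0) b_ge0) ltr01.
by rewrite qform_impact invr1 !mul1r; lra.
Qed.

Lemma qform_invmx_impact_le_idio a b v : 0 < a -> 0 <= b ->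
  qform (invmx (impact_mx a b)) v <= a^-1 * qform (invmx (diag_mx psi_id)) v.
Proof.
move=> a_gt0 b_ge0; apply: qform_invmx_le => [|x]; first exact: impact_mx_unit.
have := qform_invmx_ge x v (tr_diag_mx psi_id) (diag_mx_unit psi_id_gt0)
  (qform_diag_ge0 psi_id_gt0) a_gt0.
have := mulr_ge0 b_ge0 (qform_diag_ge0 psi_f_gt0 (W^T *m x)).
by rewrite qform_impact; lra.
Qed.

Lemma qform_invmx_impact_le_factor a b u : 0 < a -> 0 < b ->
  qform (invmx (impact_mx a b)) (W *m u)
    <= b^-1 * qform (invmx (diag_mx psi_f)) u.
Proof.
move=> a_gt0 b_gt0; apply: qform_invmx_le => [|x].
  exact: impact_mx_unit (ltW b_gt0).
have := qform_invmx_ge (W^T *m x) u (tr_diag_mx psi_f) (diag_mx_unit psi_f_gt0)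
  (qform_diag_ge0 psi_f_gt0) b_gt0.
have := mulr_ge0 (ltW a_gt0) (qform_diag_ge0 psi_id_gt0 x).
by rewrite qform_impact vdot_mulmxr; lra.
Qed.

Lemma qform_invmx_impact_bounds_idio v : exists e, forall a b, 0 < a -> 0 < b ->
  (2 - a) * qform (invmx (diag_mx psi_id)) v - b * e
    <= qform (invmx (impact_mx a b)) v
    <= a^-1 * qform (invmx (diag_mx psi_id)) v.
Proof.
set x := invmx (diag_mx psi_id) *m v.
exists (qform (diag_mx psi_f) (W^T *m x)) => a b a_gt0 b_gt0.
rewrite (qform_invmx_impact_le_idio _ a_gt0 (ltW b_gt0)) andbT.
have := qform_invmx_impact_ge x v a_gt0 (ltW b_gt0).
by rewrite qform_invmx_mul ?diag_mx_unit // vdot_invmx; lra.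
Qed.

Lemma qform_invmx_impact_bounds_factor u : row_free W^T ->
  exists e, forall a b, 0 < a -> 0 < b ->
  (2 - b) * qform (invmx (diag_mx psi_f)) u - a * e
    <= qform (invmx (impact_mx a b)) (W *m u)
    <= b^-1 * qform (invmx (diag_mx psi_f)) u.
Proof.
move=> freeWT; set x := pinvmx W^T *m (invmx (diag_mx psi_f) *m u).
have WTx : W^T *m x = invmx (diag_mx psi_f) *m u.
  by rewrite mulmxA mulmxVp ?mul1mx.
exists (qform (diag_mx psi_id) x) => a b a_gt0 b_gt0.
rewrite qform_invmx_impact_le_factor // andbT.
have := qform_invmx_impact_ge x (W *m u) a_gt0 (ltW b_gt0).
by rewrite vdot_mulmxr WTx qform_invmx_mul ?diag_mx_unit // vdot_invmx; lra.
Qed.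

Lemma qform_invmx_impact_blowup v : ~ (exists u, v = W *m u) ->
  exists2 k, 0 < k & forall a b, 0 < a -> 0 < b ->
    k / a <= qform (invmx (impact_mx a b)) v.
Proof.
case/notin_colspan_witness => z WTz; rewrite vdotC => zv.
set s := vdot z v; set t := qform (diag_mx psi_id) z.
have t_gt0 : 0 < t.
  rewrite lt_def qform_diag_ge0 // andbT qform_diag_eq0 //.
  by apply: contraNneq zv => ->; rewrite /s /vdot trmx0 mul0mx mxE.
exists (s ^+ 2 / t); first by rewrite divr_gt0 // exprn_even_gt0.
move=> a b a_gt0 b_gt0.
(* [c] maximises [2 c s - a c^2 t]; the maximum is [s^2 / (a t)]. *)
set c := s / (a * t).
have := qform_invmx_impact_ge (c *: z) v a_gt0 (ltW b_gt0).
have -> : qform (diag_mx psi_f) (W^T *m (c *: z)) = 0.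
  by rewrite -scalemxAr WTz scaler0 /qform mulmx0 mxE.
rewrite vdotZl qformZ -/s -/t.
suff -> : 2 * (c * s) - a * (c ^+ 2 * t) - b * 0 = s ^+ 2 / t / a by [].
by rewrite /c; field; rewrite !gt_eqF.
Qed.

End ImpactMatrix.

Section SqueezeLimits.
Context {T : Type} {F : set_system T} {FF : Filter F} {R : realFieldType}.

Lemma squeeze_cvgr_inv (s t f : T -> R) (c e : R) :
  s @ F --> (1 : R) -> t @ F --> (0 : R) ->
  (\forall p \near F, (2 - s p) * c - t p * e <= f p <= (s p)^-1 * c) ->
  f @ F --> c.
Proof.
move=> s1 t0 bounds; apply: (squeeze_cvgr bounds).
  rewrite -[X in _ --> X](_ : (2 - 1) * c - 0 * e = c); last by ring.
  by apply: cvgB; apply: cvgMr_tmp => //; apply: cvgB => //; exact: cvg_cst.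
rewrite -[X in _ --> X](_ : 1^-1 * c = c); last by rewrite invr1 mul1r.
by apply: cvgMr_tmp; apply: cvgV => //; exact: oner_neq0.
Qed.

Lemma cvgry_inv (s f : T -> R) (k : R) : 0 < k -> s @ F --> (0 : R) ->
  (\forall p \near F, 0 < s p /\ k / s p <= f p) -> f @ F --> +oo.
Proof.
move=> k_gt0 s0 bounds.
apply: (@ger_cvgy _ _ _ _ (fun p => (s p / k)^-1)).
  by apply: filterS bounds => p [_]; rewrite invf_div.
apply/cvgrVy; first by apply: filterS bounds => p [s_gt0 _]; rewrite divr_gt0.
by rewrite -(mul0r k^-1); apply: cvgMr_tmp.
Qed.

End SqueezeLimits.

Lemma near_param_dom (R : realType) (x : R * R) (P : R * R -> Prop) :
  (forall a b, 0 < a -> 0 < b -> P (a, b)) ->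
  \forall p \near within (@param_dom R) (nbhs x), P p.
Proof.
move=> HP; rewrite near_withinE; apply: filterE => -[a b].
by case=> /andP[a_gt0 _] /andP[b_gt0 _]; exact: HP.
Qed.

Theorem proposition2 (R : realType) (N K : nat)
  (psi_id : 'rV[R]_N) (psi_f : 'rV[R]_K) (W : 'M[R]_(N, K)) :
  (forall i, 0 < psi_id 0 i) ->
  (forall k, 0 < psi_f 0 k) ->
  row_free W^T ->
  (* (i) *)
  (forall v : 'cV[R]_N,
     ((fun p : R * R => Cbar psi_id psi_f W p.1 p.2 v)
        @ within (@param_dom R) (nbhs ((1 : R), (0 : R)))
        --> 2^-1 * (v^T *m invmx (diag_mx psi_id) *m v) 0 0)
     /\ 2^-1 * (v^T *m invmx (diag_mx psi_id) *m v) 0 0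
        = 2^-1 * \sum_(i < N) (v i 0 ^+ 2 / psi_id 0 i)) /\
  (* (ii) *)
  (forall v : 'cV[R]_N,
     ~ (exists u : 'cV[R]_K, v = W *m u) ->
     (fun p : R * R => Cbar psi_id psi_f W p.1 p.2 v)
        @ within (@param_dom R) (nbhs ((0 : R), (1 : R))) --> +oo) /\
  (forall (u : 'cV[R]_K) (v : 'cV[R]_N), v = W *m u ->
     (fun p : R * R => Cbar psi_id psi_f W p.1 p.2 v)
        @ within (@param_dom R) (nbhs ((0 : R), (1 : R)))
        --> 2^-1 * (u^T *m invmx (diag_mx psi_f) *m u) 0 0).
Proof.
move=> psi_id_gt0 psi_f_gt0 freeWT.
have fst_cvg (x y : R) : fst @ within (@param_dom R) (nbhs (x, y)) --> x.
  by apply: cvg_within_filter; exact: cvg_fst.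
have snd_cvg (x y : R) : snd @ within (@param_dom R) (nbhs (x, y)) --> y.
  by apply: cvg_within_filter; exact: cvg_snd.
split; [|split].
- move=> v; split; last by rewrite -/(qform _ v) qform_invmx_diag.
  apply: cvgMl_tmp.
  have [e bounds] := qform_invmx_impact_bounds_idio W psi_id_gt0 psi_f_gt0 v.
  apply: (squeeze_cvgr_inv (e := e) (fst_cvg 1 0) (snd_cvg 1 0)).
  by apply: near_param_dom => a b; exact: bounds.
- move=> v /(qform_invmx_impact_blowup psi_id_gt0 psi_f_gt0)[k k_gt0 bounds].
  apply: (cvgry_inv (k := 2^-1 * k) _ (fst_cvg 0 1)); first by rewrite mulr_gt0.
  apply: near_param_dom => a b a_gt0 b_gt0; split=> //.
  by rewrite -mulrA ler_pM2l ?bounds.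
- move=> u _ ->; apply: cvgMl_tmp.
  have [e bounds] :=
    qform_invmx_impact_bounds_factor psi_id_gt0 psi_f_gt0 u freeWT.
  apply: (squeeze_cvgr_inv (e := e) (snd_cvg 0 1) (fst_cvg 0 1)).
  by apply: near_param_dom => a b a_gt0 b_gt0; exact: bounds.
Qed.
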